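(* Let $X=\{1,\dots,n\}$, $Y$ finite, $Q$ a symmetric irreducible stochastic matrix on $Y$ (notation in context). Let $0\le h\le n$ and let $\underline b$ be a type with $b_0+\cdots+b_m=h$. Then the subspaces $P_{h,\underline b,k}$ of $L(\Theta_h)$, for the integers $k$ with $\ell(\underline b)\le k\le\min\{h,\frac{n+\ell(\underline b)}{2}\}$, are mutually orthogonal with respect to the inner product $\langle F,G\rangle=\sum_{\theta\in\Theta_h}F(\theta)\overline{G(\theta)}$.
   Context: $Q$ acts on $L(Y)$ by $(Qf)(y)=\sum_{y'}q(y,y')f(y')$, with distinct eigenvalues $\lambda_0=1,\dots,\lambda_m$ and eigenspaces $W_0$ (constants), $W_1,\dots,W_m$. For $0\le k\le n$, $\Theta_k$ is the set of functions $\theta$ with $\mathrm{dom}(\theta)$ a $k$-subset of $X$ and values in $Y$ ($\Theta_0$ = empty function); $\varphi\subseteq\theta$ means $\mathrm{dom}\varphi\subseteq\mathrm{dom}\theta$ and $\theta|_{\mathrm{dom}\varphi}=\varphi$. For $1\le k\le n$: $(D_kF)(\varphi)=\sum_{\theta\in\Theta_k:\theta\supseteq\varphi}F(\theta)$ and $(D_k^*F)(\theta)=\sum_{\varphi\in\Theta_{k-1}:\varphi\subseteq\theta}F(\varphi)$; $D_0:=0$. Types $\underline c=(c_0,\dots,c_m)$, $|\underline c|=\sum c_i$, $\ell(\underline c)=c_1+\cdots+c_m$, $\underline c'=(c_0-1,c_1,\dots,c_m)$. A fundamental function of type $\underline c$ on $A$, $|A|=|\underline c|$, is $F=\bigotimes_{j\in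 A}F^j$ ($F(\theta)=\prod_{j\in A}F^j(\theta(j))$ on $Y^A$, $0$ elsewhere) with each $F^j$ in some $W_{i_j}$ and exactly $c_i$ indices with $i_j=i$; $P_{k,\underline c,A}$ is their span, $P_{k,\underline c}=\bigoplus_{|A|=k}P_{k,\underline c,A}$ ($\{0\}$ if an entry is negative). $D_{k,\underline c}=D_k|_{P_{k,\underline c}}$, $D^*_{k,\underline c}=D^*_k|_{P_{k-1,\underline c'}}$. For $|\underline c|=k$: $P_{k,\underline c,k}=\ker D_{k,\underline c}$; for $k<h\le n$, $|\underline c|=h$, $\ell(\underline c)\le k$: $P_{h,\underline c,k}=D^*_{h,\underline c}(P_{h-1,\underline c',k})$. *)

From mathcomp Require Import all_boot all_order all_algebra.
Set Implicit Arguments. Unset Strict Implicit. Unset Printing Implicit Defensive.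
Import Order.TTheory GRing.Theory Num.Theory.
Local Open Scope ring_scope.

Section Defs.
Variables (C : numClosedFieldType) (Y : finType) (n : nat).

(* Partial functions X -> Y with X = 'I_n; dom = where defined. *)
Definition Theta := {ffun 'I_n -> option Y}.
Definition dom (t : Theta) : {set 'I_n} := [set j | t j != None].
Definition subf (phi theta : Theta) : bool :=
  [forall j, (phi j != None) ==> (theta j == phi j)].

Definition qaction (q : Y -> Y -> C) (f : Y -> C) : Y -> C :=
  fun y => \sum_(y' : Y) q y y' * f y'.

Fixpoint qpow (q : Y -> Y -> C) (k : nat) : Y -> Y -> C :=
  match k with
  | 0 => fun y y' => (y == y')%:R
  | k'.+1 => fun y y' => \sum_(z : Y) qpow q k' y z * q z y'
  end.

Definition sym_irr_stochastic (q : Y -> Y -> C) : Prop :=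
  [/\ (forall y y', 0 <= q y y'),
      (forall y, \sum_(y' : Y) q y y' = 1),
      (forall y y', q y y' = q y' y) &
      (forall y y', exists k, 0 < qpow q k y y')].

Definition W (q : Y -> Y -> C) (mu : C) (f : Y -> C) : Prop :=
  forall y, qaction q f y = mu * f y.

Definition eigen_enum (m : nat) (q : Y -> Y -> C) (lam : 'I_m.+1 -> C) : Prop :=
  [/\ lam ord0 = 1, injective lam,
      (forall i, exists f : Y -> C, (exists y, f y != 0) /\ W q (lam i) f) &
      (forall (mu : C) (f : Y -> C), (exists y, f y != 0) -> W q mu f ->
          exists i, mu = lam i)].

Section Spaces.
Variables (m : nat) (q : Y -> Y -> C) (lam : 'I_m.+1 -> C).

(* fundamental function of type c on A (types are int-valued so that
   a type with a negative entry has no fundamental functions, giving {0}) *)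
Definition fundamental (c : 'I_m.+1 -> int) (A : {set 'I_n}) (F : Theta -> C)
  : Prop :=
  exists (idx : 'I_n -> 'I_m.+1) (Fj : 'I_n -> Y -> C),
    [/\ (forall i, (#|[set j in A | idx j == i]|)%:Z = c i),
        (forall j, j \in A -> W q (lam (idx j)) (Fj j)) &
        (forall t, F t = if dom t == A then
                          \prod_(j in A) match t j with
                                         | Some y => Fj j y
                                         | None => 0
                                         end
                        else 0)].

Definition span (S : (Theta -> C) -> Prop) (F : Theta -> C) : Prop :=
  exists (N : nat) (a : 'I_N -> C) (g : 'I_N -> Theta -> C),
    (forall i, S (g i)) /\ (forall t, F t = \sum_(i < N) a i * g i t).

Definition PkcA (c : 'I_m.+1 -> int) (A : {set 'I_n}) := span (fundamental c A).
Definition Pkc (k : nat) (c : 'I_m.+1 -> int) : (Theta -> C) -> Prop :=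
  span (fun F => exists A : {set 'I_n}, #|A| = k /\ fundamental c A F).

Definition Dop (k : nat) (F : Theta -> C) : Theta -> C :=
  fun phi => if k is k'.+1 then
     (if #|dom phi| == k' then
        \sum_(t : Theta | (#|dom t| == k) && subf phi t) F t else 0)
     else 0.

Definition Dstar (k : nat) (F : Theta -> C) : Theta -> C :=
  fun theta => if #|dom theta| == k then
     \sum_(phi : Theta | (#|dom phi| == k.-1) && subf phi theta) F phi else 0.

Definition cprime (c : 'I_m.+1 -> int) : 'I_m.+1 -> int :=
  fun i => if i == ord0 then c i - 1 else c i.

(* P_{k+d, c, k}, by recursion on d = h - k *)
Fixpoint Phck (d k : nat) (c : 'I_m.+1 -> int) : (Theta -> C) -> Prop :=
  match d with
  | 0 => fun F => Pkc k c F /\ (forall t, Dop k F t = 0)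
  | d'.+1 => fun G => exists F, Phck d' k (cprime c) F /\
                                (forall t, G t = Dstar (k + d'.+1) F t)
  end.

Definition Phk (h : nat) (c : 'I_m.+1 -> int) (k : nat) := Phck (h - k) k c.

End Spaces.

Definition ip (h : nat) (F G : Theta -> C) : C :=
  \sum_(t : Theta | #|dom t| == h) F t * Num.conj (G t).

Definition ell (m : nat) (c : 'I_m.+1 -> nat) : nat :=
  (\sum_(i < m.+1 | i != ord0) c i)%N.

End Defs.

(* On P_{k,c} the lowering and raising operators satisfy the commutation
   relation D_{k+1} D*_{k+1} = D*_k D_k + ((n-k)|Y| - |Y| c_0) Id: the two
   products differ only by the term resampling one defined coordinate, and
   resampling a coordinate of a fundamental function sums its factor over Y,
   which kills a factor in W_i (i > 0) and multiplies a factor in W_0 (a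
   constant, by irreducibility) by |Y|. Since D* maps P_{k,c} into
   P_{k+1,c+e_0}, it follows that for F0 in the kernel of D, D applied to
   D*^(r+1) F0 is a multiple of D*^r F0. For k1 < k2, write F = D*^(h-k1) F0
   and G = D*^(h-k2) G0 and move the raising operators of G across the inner
   product as lowering operators on F: this leaves a multiple of
   <D*^(k2-k1) F0, G0> = <D*^(k2-k1-1) F0, D G0> = 0. *)

From Pilot Require Import Defs.
From mathcomp Require Import all_boot all_order all_algebra.
From mathcomp Require Import ring zify.
Import Order.TTheory GRing.Theory Num.Theory.
Local Open Scope ring_scope.
Set Implicit Arguments. Unset Strict Implicit. Unset Printing Implicit Defensive.

Section PartialFunctions.
Variables (Y : finType) (n : nat).
Local Notation Th := (Theta Y n).

Definition upd (t : Th) (x : 'I_n) (v : option Y) : Th :=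
  [ffun j => if j == x then v else t j].

Lemma in_dom (t : Th) x : (x \in dom t) = (t x != None).
Proof. by rewrite inE. Qed.

Lemma dom_updS (t : Th) x y : dom (upd t x (Some y)) = x |: dom t.
Proof. by apply/setP=> j; rewrite !inE ffunE; case: (j == x). Qed.

Lemma dom_updS_in (t : Th) x y : x \in dom t -> dom (upd t x (Some y)) = dom t.
Proof. by move=> xt; rewrite dom_updS; apply/setUidPr; rewrite sub1set. Qed.

Lemma dom_updN (t : Th) x : dom (upd t x None) = dom t :\ x.
Proof. by apply/setP=> j; rewrite !inE ffunE; case: (j == x). Qed.

Lemma upd_upd (t : Th) x v w : upd (upd t x v) x w = upd t x w.
Proof. by apply/ffunP=> i; rewrite !ffunE; case: (i == x). Qed.

Lemma updC (t : Th) x z v w : x != z -> upd (upd t x v) z w = upd (upd t z w) x v.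
Proof.
move=> xz; apply/ffunP=> i; rewrite !ffunE.
by case: (i =P z) => [->|//]; rewrite eq_sym (negbTE xz).
Qed.

Lemma upd_notin (t : Th) x : x \notin dom t -> upd t x None = t.
Proof.
rewrite in_dom negbK => /eqP tx.
by apply/ffunP=> i; rewrite ffunE; case: (i =P x) => // ->.
Qed.

Lemma subf_dom (p t : Th) : subf p t -> dom p \subset dom t.
Proof.
move=> /forallP spt; apply/subsetP=> j; rewrite !inE => pj.
by have := spt j; rewrite pj => /eqP ->.
Qed.

Lemma subfP (p t : Th) j : subf p t -> j \in dom p -> t j = p j.
Proof. by rewrite in_dom => /forallP /(_ j) spt pj; apply/eqP; rewrite pj in spt. Qed.

Lemma subf_updS (t : Th) x y : x \notin dom t -> subf t (upd t x (Some y)).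
Proof.
move=> xt; apply/forallP=> i; apply/implyP; rewrite -in_dom ffunE => it.
by case: (i =P x) => // ix; rewrite -ix it in xt.
Qed.

Lemma subf_updN (t : Th) x : subf (upd t x None) t.
Proof.
by apply/forallP=> i; rewrite ffunE; case: (i == x) => //=; rewrite eqxx implybT.
Qed.

Lemma subf_succ (p t : Th) : subf p t -> #|dom t| = #|dom p|.+1 ->
  exists2 x, dom t :\: dom p = [set x] & forall i, i != x -> t i = p i.
Proof.
move=> spt ct; have sdpt := subf_dom spt.
have /cards1P[x dx] : #|dom t :\: dom p| == 1%N.
  by rewrite cardsD (setIidPr sdpt) ct subSnn.
exists x => // i ix; case: (boolP (i \in dom p)) => [ip|ip]; first exact: subfP.
have : i \notin dom t :\: dom p by rewrite dx inE.
by rewrite inE ip /= in_dom negbK => /eqP ->; move: ip; rewrite in_dom negbK => /eqP ->.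
Qed.

Definition new_point (p t : Th) : option 'I_n := [pick x in dom t :\: dom p].

Lemma new_point_succ (p t : Th) : subf p t -> #|dom t| = #|dom p|.+1 ->
  exists x, [/\ new_point p t = Some x, x \in dom t, x \notin dom p &
                forall i, i != x -> t i = p i].
Proof.
move=> spt ct; have [x dx tp] := subf_succ spt ct.
have : x \in dom t :\: dom p by rewrite dx set11.
by rewrite inE => /andP[xp xt]; exists x; rewrite /new_point dx pick_set1.
Qed.

End PartialFunctions.

Section LoweringRaising.
Variables (C : numClosedFieldType) (Y : finType) (n : nat).
Local Notation Th := (Theta Y n).

Lemma sum_one_point_extensions (phi : Th) j (G : Th -> C) : #|dom phi| = j ->
  \sum_(t | (#|dom t| == j.+1) && subf phi t) G t =
  \sum_(x in ~: dom phi) \sum_(y : Y) G (upd phi x (Some y)).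
Proof.
move=> <-; rewrite (reindex_omap (fun p : 'I_n * Y => upd phi p.1 (Some p.2))
  (fun t => obind (fun x => omap (pair x) (t x)) (new_point phi t))) /=.
  rewrite pair_big_dep; apply: eq_bigl => -[x y] /=.
  rewrite /new_point dom_updS cardsU1 in_setC andbT.
  case: (boolP (x \in dom phi)) => xphi /=.
    by rewrite add0n ltn_eqF.
  have -> : (x |: dom phi) :\: dom phi = [set x].
    apply/setP=> i; rewrite !inE -!in_dom.
    by case: (i =P x) => [->|_]; rewrite ?xphi ?andNb.
  by rewrite subf_updS // pick_set1 /= ffunE !eqxx.
move=> t /andP[/eqP ct spt]; have [x [-> xt xphi tphi]] := new_point_succ spt ct.
move: xt; rewrite in_dom; case tx: (t x) => [y|] // _; simpl; rewrite tx; congr Some.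
by apply/ffunP=> i; rewrite ffunE; case: (i =P x) => [->|/eqP/tphi].
Qed.

Lemma sum_one_point_restrictions (t : Th) j (G : Th -> C) : #|dom t| = j.+1 ->
  \sum_(p | (#|dom p| == j) && subf p t) G p = \sum_(z in dom t) G (upd t z None).
Proof.
move=> ct; rewrite (reindex_omap (fun z => upd t z None) (fun p => new_point p t)) /=.
  apply: eq_bigl => z; rewrite /new_point dom_updN subf_updN.
  case: (boolP (z \in dom t)) => zt; last first.
    by have := cardsD1 z (dom t); rewrite ct (negbTE zt) add0n => <-; rewrite gtn_eqF.
  have -> : dom t :\: (dom t :\ z) = [set z].
    apply/setP=> i; rewrite !inE -!in_dom.
    by case: (i =P z) => [->|_] /=; rewrite ?zt ?andNb.
  have := cardsD1 z (dom t); rewrite ct zt add1n => -[<-].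
  by rewrite pick_set1 !eqxx.
move=> p /andP[/eqP cp spt]; rewrite -cp in ct.
have [x [-> _ xp tp]] := new_point_succ spt ct.
congr Some; apply/ffunP=> i; rewrite ffunE; case: (i =P x) => [->|/eqP/tp //].
by move: xp; rewrite in_dom negbK => /eqP.
Qed.

Lemma DopE (F : Th -> C) j phi : #|dom phi| = j ->
  Dop j.+1 F phi = \sum_(x in ~: dom phi) \sum_(y : Y) F (upd phi x (Some y)).
Proof.
by move=> cphi; rewrite /Dop cphi eqxx (sum_one_point_extensions _ cphi).
Qed.

Lemma DstarE (F : Th -> C) j t : #|dom t| = j.+1 ->
  Dstar j.+1 F t = \sum_(z in dom t) F (upd t z None).
Proof. by move=> ct; rewrite /Dstar ct eqxx (sum_one_point_restrictions _ ct). Qed.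

Lemma eq_Dstar k (F G : Th -> C) : (forall t, #|dom t| = k.-1 -> F t = G t) ->
  forall t, Dstar k F t = Dstar k G t.
Proof.
move=> FG t; rewrite /Dstar; case: ifP => // _.
by apply: eq_bigr => p /andP[/eqP cp _]; apply: FG.
Qed.

Lemma Dstar0 k t : Dstar k (fun _ : Th => 0 : C) t = 0.
Proof. by rewrite /Dstar; case: ifP => // _; rewrite big1. Qed.

Lemma DstarZ k (F : Th -> C) s t : Dstar k (fun u => s * F u) t = s * Dstar k F t.
Proof. by rewrite /Dstar; case: ifP => _; rewrite ?mulr0 // mulr_sumr. Qed.

Definition resample (F : Th -> C) (phi : Th) : C :=
  \sum_(z in dom phi) \sum_(y : Y) F (upd phi z (Some y)).

Lemma Dop_DstarE (F : Th -> C) j phi : #|dom phi| = j ->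
  Dop j.+1 (Dstar j.+1 F) phi = ((n - j) * #|Y|)%:R * F phi +
    \sum_(x in ~: dom phi) \sum_(y : Y) \sum_(z in dom phi)
      F (upd (upd phi x (Some y)) z None).
Proof.
move=> cphi; have cC : #|~: dom phi| = (n - j)%N.
  by have := cardsC (dom phi); rewrite card_ord cphi; lia.
rewrite DopE // -cC natrM -mulrA mulr_natl -sumr_const -big_split /=.
apply: eq_bigr => x; rewrite inE => xphi.
rewrite mulr_natl -sumr_const -big_split /=; apply: eq_bigr => y _.
rewrite (DstarE _ (j := j)) dom_updS ?cardsU1 ?(negbTE xphi) ?cphi //.
by rewrite big_setU1 //= upd_upd upd_notin.
Qed.

Lemma Dstar_DopE (F : Th -> C) j phi : #|dom phi| = j ->
  Dstar j (Dop j F) phi = resample F phi +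
    \sum_(x in ~: dom phi) \sum_(y : Y) \sum_(z in dom phi)
      F (upd (upd phi x (Some y)) z None).
Proof.
case: j => [|j] cphi.
  rewrite /resample (cards0_eq cphi) big_set0 add0r.
  rewrite [RHS]big1 => [|x _]; last by rewrite big1 // => y _; rewrite big_set0.
  by rewrite /Dstar; case: ifP => // _; rewrite big1.
rewrite (DstarE _ cphi) /resample; transitivity (\sum_(z in dom phi)
  (\sum_(y : Y) F (upd phi z (Some y)) +
   \sum_(x in ~: dom phi) \sum_(y : Y) F (upd (upd phi x (Some y)) z None))).
  apply: eq_bigr => z zphi.
  have cphiz : #|dom (upd phi z None)| = j.
    by move: cphi; rewrite dom_updN (cardsD1 z) zphi add1n => -[].
  rewrite (DopE _ cphiz) dom_updN (bigD1 z) ?inE ?eqxx //=.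
  congr (_ + _); first by apply: eq_bigr => y _; rewrite upd_upd.
  apply: eq_big => [x|x /andP[_ xz]]; last first.
    by apply: eq_bigr => y _; rewrite updC // eq_sym.
  by rewrite !inE -in_dom; case: eqP => [->|_] /=; rewrite ?zphi ?andbT.
rewrite big_split /=; congr (_ + _).
by rewrite exchange_big; apply: eq_bigr => x _; apply: exchange_big.
Qed.

Lemma Dop_Dstar_comm (F : Th -> C) j phi : #|dom phi| = j ->
  Dop j.+1 (Dstar j.+1 F) phi =
  Dstar j (Dop j F) phi + ((n - j) * #|Y|)%:R * F phi - resample F phi.
Proof.
move=> cphi; rewrite (Dop_DstarE _ cphi) (Dstar_DopE _ cphi).
by rewrite (addrC (resample F phi)) addrAC addrK addrC.
Qed.

End LoweringRaising.

Section Span.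
Variables (C : numClosedFieldType) (Y : finType) (n : nat).
Local Notation Th := (Theta Y n).
Local Notation span := (@Defs.span C Y n).
Implicit Types (S : (Th -> C) -> Prop) (f g : Th -> C).

Lemma span0 S : span S (fun _ => 0).
Proof.
by exists 0%N, (fun _ => 0), (fun _ _ => 0); split => [[]|t]; rewrite ?big_ord0.
Qed.

Lemma span1 S f : S f -> span S f.
Proof.
move=> Sf; exists 1%N, (fun _ => 1), (fun _ => f).
by split=> // t; rewrite big_ord1 mul1r.
Qed.

Lemma span_ext S f g : span S f -> (forall t, g t = f t) -> span S g.
Proof. by move=> [N [a [h [Sh E]]]] gf; exists N, a, h; split=> // t; rewrite gf E. Qed.

Lemma spanD S f g : span S f -> span S g -> span S (fun t => f t + g t).
Proof.
move=> [N1 [a1 [g1 [S1 E1]]]] [N2 [a2 [g2 [S2 E2]]]].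
exists (N1 + N2)%N, (fun k => match split k with inl i => a1 i | inr i => a2 i end),
  (fun k => match split k with inl i => g1 i | inr i => g2 i end); split.
  by move=> k; case: (split k).
move=> t; rewrite big_split_ord E1 E2.
by congr (_ + _); apply: eq_bigr => i _;
  [rewrite (unsplitK (inl i)) | rewrite (unsplitK (inr i))].
Qed.

Lemma spanZ S f (s : C) : span S f -> span S (fun t => s * f t).
Proof.
move=> [N [a [g [Sg E]]]]; exists N, (fun i => s * a i), g; split=> // t.
by rewrite E mulr_sumr; apply: eq_bigr => i _; rewrite mulrA.
Qed.

Lemma span_sum S (I : finType) (P : pred I) (f : I -> Th -> C) :
  (forall i, P i -> span S (f i)) -> span S (fun t => \sum_(i | P i) f i t).
Proof.
move=> Sf; rewrite /index_enum; elim: (Finite.enum I) => [|i s IH].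
  by apply: (span_ext (span0 S)) => t; rewrite big_nil.
apply: (span_ext (spanD (f := fun t => if P i then f i t else 0) _ IH)) => [|t].
  by case Pi: (P i); [apply: Sf | apply: span0].
by rewrite big_cons; case: (P i); rewrite ?add0r.
Qed.

End Span.

Section Eigenfunctions.
Variables (C : numClosedFieldType) (Y : finType) (q : Y -> Y -> C).
Hypothesis hq : sym_irr_stochastic q.

Lemma eigen_sum_eq0 mu f : W q mu f -> mu != 1 -> \sum_y f y = 0.
Proof.
case: hq => _ q1 qs _ Wf mu1.
have : \sum_y qaction q f y = mu * \sum_y f y.
  by rewrite mulr_sumr; apply: eq_bigr => y _; rewrite Wf.
rewrite /qaction exchange_big /=.
rewrite (eq_bigr (fun y' => f y')) => [/eqP|y' _]; last first.
  by rewrite -mulr_suml (eq_bigr _ (fun y _ => qs y y')) q1 mul1r.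
rewrite -subr_eq0 -{1}[\sum_y f y]mul1r -mulrBl mulf_eq0 subr_eq0 eq_sym.
by rewrite (negbTE mu1) => /eqP.
Qed.

Lemma qpow_ge0 k y y' : 0 <= qpow q k y y'.
Proof.
case: hq => q0 _ _ _; elim: k y y' => [|k IH] y y' /=; first exact: ler0n.
by apply: sumr_ge0 => z _; apply: mulr_ge0.
Qed.

(* The Dirichlet form sum_{y,y'} q(y,y') |f y - f y'|^2 vanishes on W_0,
   and all its terms are nonnegative. *)
Lemma eigen1_edge f y y' : W q 1 f -> 0 < q y y' -> f y = f y'.
Proof.
case: hq => q0 q1 qs _ Wf qyy'.
pose d a b := f a - f b.
have row0 a : \sum_b q a b * d a b = 0.
  rewrite (eq_bigr (fun b => q a b * f a - q a b * f b)) => [|b _]; last exact: mulrBr.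
  by rewrite sumrB -mulr_suml q1 mul1r -[X in _ - X]/(qaction q f a) Wf mul1r subrr.
have dirichlet : \sum_a \sum_b q a b * (d a b * Num.conj (d a b)) = 0.
  transitivity (\sum_a \sum_b Num.conj (f a) * (q a b * d a b) +
                \sum_b \sum_a Num.conj (f b) * (q b a * d b a)).
    rewrite [X in _ = _ + X]exchange_big -big_split; apply: eq_bigr => a _.
    by rewrite -big_split; apply: eq_bigr => b _; rewrite /d rmorphB qs /=; ring.
  by rewrite !big1 ?addr0 // => a _; rewrite -mulr_sumr row0 mulr0.
have nonneg a b : 0 <= q a b * (d a b * Num.conj (d a b)).
  by apply: mulr_ge0; rewrite ?mul_conjC_ge0.
move/eqP: dirichlet; rewrite psumr_eq0 => [|a _]; last exact: sumr_ge0.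
move=> /allP /(_ y (mem_index_enum _)); rewrite psumr_eq0 => [|b _] //.
move=> /allP /(_ y' (mem_index_enum _)); rewrite mulf_eq0 mul_conjC_eq0 subr_eq0.
by rewrite (gt_eqF qyy') => /eqP.
Qed.

Lemma eigen1_const f y y' : W q 1 f -> f y = f y'.
Proof.
case: hq => q0 _ _ qirr Wf; have [k] := qirr y y'.
elim: k y' => [|k IH] y' /=; first by case: eqP => [->|_]; rewrite ?ltxx.
case: (pickP (fun z => qpow q k y z * q z y' != 0)) => [z|qk0]; last first.
  by rewrite big1 ?ltxx // => z _; apply/eqP; rewrite -[_ == _]negbK qk0.
rewrite mulf_eq0 negb_or => /andP[qk qz] _.
by rewrite (IH z) ?lt0r ?qk ?qpow_ge0 // (eigen1_edge (y' := y') Wf) // lt0r qz q0.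
Qed.

End Eigenfunctions.

Section Fundamental.
Variables (C : numClosedFieldType) (Y : finType) (n m : nat).
Variables (q : Y -> Y -> C) (lam : 'I_m.+1 -> C).
Hypothesis hq : sym_irr_stochastic q.
Hypothesis hlam : eigen_enum q lam.
Local Notation Th := (Theta Y n).

Lemma sum_eigen i f w : W q (lam i) f ->
  \sum_y f y = if i == ord0 then f w *+ #|Y| else 0.
Proof.
case: hlam => l0 linj _ _ Wf; case: eqP => [i0|i0].
  rewrite (eq_bigr (fun _ => f w)) ?sumr_const // => y _.
  by apply: (eigen1_const hq); rewrite -l0 -i0.
by apply: (eigen_sum_eq0 hq Wf); rewrite -l0 (inj_eq linj); apply/eqP.
Qed.

Definition prodf (Fj : 'I_n -> Y -> C) (A : {set 'I_n}) (t : Th) : C :=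
  if dom t == A then \prod_(a in A) oapp (Fj a) 0 (t a) else 0.

Lemma prodf_updS Fj A (phi : Th) z y : dom phi = A -> z \in A ->
  prodf Fj A (upd phi z (Some y)) =
  Fj z y * \prod_(a in A | a != z) oapp (Fj a) 0 (phi a).
Proof.
move=> dphi zA; rewrite /prodf dom_updS_in dphi ?eqxx //.
rewrite (bigD1 z) //= ffunE eqxx; congr (_ * _).
by apply: eq_bigr => a /andP[_ az]; rewrite ffunE (negbTE az).
Qed.

Lemma resample_fundamental c A (F : Th -> C) phi : fundamental q lam c A F ->
  resample F phi = (#|Y|%:R * (c ord0)%:~R) * F phi.
Proof.
move=> [idx [Fj [cnt eig FE]]]; have {}FE : F =1 prodf Fj A := FE.
rewrite /resample FE; have [dphi|] := eqVneq (dom phi) A; last first.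
  move=> dphiA; rewrite /prodf (negbTE dphiA) mulr0.
  apply: big1 => z zphi; apply: big1 => y _.
  by rewrite FE /prodf dom_updS_in // (negbTE dphiA).
have col z : z \in A -> \sum_y F (upd phi z (Some y)) =
    (idx z == ord0)%:R * (#|Y|%:R * prodf Fj A phi).
  move=> zA; have : z \in dom phi by rewrite dphi.
  rewrite in_dom; case pz: (phi z) => [w|] // _.
  rewrite (eq_bigr _ (fun y _ => etrans (FE _) (prodf_updS _ _ dphi zA))).
  rewrite -mulr_suml (sum_eigen w (eig z zA)) /prodf dphi eqxx [in RHS](bigD1 z) //= pz.
  by case: eqP => _; rewrite ?mul0r ?mul1r // mulr_natl mulrnAl.
have cnt0 : (\sum_(z in A) (idx z == ord0))%N = #|[set j in A | idx j == ord0]|.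
  rewrite -sum1_card big_mkcond [RHS]big_mkcond; apply: eq_bigr => j _.
  by rewrite inE; case: (j \in A); case: (idx j == ord0).
rewrite dphi (eq_bigr _ col) -mulr_suml -natr_sum cnt0 -(cnt ord0) -pmulrn.
by rewrite mulrA [_ * #|Y|%:R]mulrC.
Qed.

Definition cinc (c : 'I_m.+1 -> int) : 'I_m.+1 -> int :=
  fun i => if i == ord0 then c i + 1 else c i.

Definition pad1 (Fj : 'I_n -> Y -> C) x : 'I_n -> Y -> C :=
  fun a => if a == x then fun _ => 1 else Fj a.

Lemma fundamental_pad1 c (A : {set 'I_n}) idx Fj x : x \notin A ->
  (forall i, #|[set j in A | idx j == i]|%:Z = c i) ->
  (forall j, j \in A -> W q (lam (idx j)) (Fj j)) ->
  fundamental q lam (cinc c) (x |: A) (prodf (pad1 Fj x) (x |: A)).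
Proof.
move=> xA cnt eig; case: hlam => l0 _ _ _.
exists (fun a => if a == x then ord0 else idx a), (pad1 Fj x); split=> //.
- move=> i; rewrite /cinc; case: eqP => [->|i0].
    rewrite (_ : [set j in x |: A | _] = x |: [set j in A | idx j == ord0]).
      by rewrite cardsU1 inE (negbTE xA) PoszD cnt addrC.
    by apply/setP=> a; rewrite !inE; case: (a =P x) => [->|].
  rewrite -cnt (_ : [set j in x |: A | _] = [set j in A | idx j == i]) //.
  apply/setP=> a; rewrite !inE; case: (a =P x) => [->|//].
  by rewrite (negbTE xA) eq_sym /=; apply/eqP.
- move=> a; rewrite /pad1 !inE; case: (a =P x) => [_ _ y|_ /= aA].
    case: hq => _ q1 _ _; rewrite /qaction l0 mul1r -[RHS](q1 y).
    by apply: eq_bigr => y' _; rewrite mulr1.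
  exact: eig.
Qed.

Lemma Dstar_prodf Fj (A : {set 'I_n}) j : #|A| = j -> forall t : Th,
  Dstar j.+1 (prodf Fj A) t = \sum_(x in ~: A) prodf (pad1 Fj x) (x |: A) t.
Proof.
move=> cA t; rewrite /Dstar; case: eqP => ct; last first.
  apply/esym/big1 => x; rewrite inE => xA; rewrite /prodf; case: eqP => // dt.
  by case: ct; rewrite dt cardsU1 xA cA.
pose P := \prod_(a in A) oapp (Fj a) 0 (t a).
rewrite (sum_one_point_restrictions _ ct).
transitivity (\sum_(z | (z \in dom t) && (dom t :\ z == A)) P).
  rewrite big_mkcondr; apply: eq_bigr => z zt; rewrite /prodf dom_updN.
  case: eqP => // dtz; apply: eq_bigr => a; rewrite -dtz !inE ffunE => /andP[az _].
  by rewrite (negbTE az).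
transitivity (\sum_(x in ~: A | dom t == x |: A) P); last first.
  rewrite big_mkcondr; apply: eq_bigr => x; rewrite inE => xA.
  rewrite /prodf; case: eqP => // dt; rewrite big_setU1 //= {1}/pad1 eqxx.
  have : x \in dom t by rewrite dt setU11.
  rewrite in_dom; case: (t x) => // y _; rewrite mul1r.
  by apply: eq_bigr => a aA; rewrite /pad1; case: (a =P x) => // ax; rewrite -ax aA in xA.
apply: eq_bigl => z; apply/andP/andP => [[zt /eqP dA]|[zA /eqP dz]].
  by rewrite -dA !inE eqxx setD1K.
by rewrite dz setU11 setU1K // -in_setC.
Qed.

Lemma Dstar_lincomb k (X : Th -> C) N (a : 'I_N -> C) (g : 'I_N -> Th -> C) :
  (forall t, X t = \sum_i a i * g i t) ->
  forall t, Dstar k X t = \sum_i a i * Dstar k (g i) t.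
Proof.
move=> XE t; rewrite /Dstar; case: ifP => _; last first.
  by rewrite big1 // => i _; rewrite mulr0.
rewrite (eq_bigr _ (fun p _ => XE p)) exchange_big /=.
by apply: eq_bigr => i _; rewrite mulr_sumr.
Qed.

Lemma resample_lincomb (X : Th -> C) N (a : 'I_N -> C) (g : 'I_N -> Th -> C) :
  (forall t, X t = \sum_i a i * g i t) ->
  forall phi, resample X phi = \sum_i a i * resample (g i) phi.
Proof.
move=> XE phi; rewrite /resample.
under eq_bigr => z _ do rewrite (eq_bigr _ (fun y _ => XE _)) exchange_big /=.
rewrite exchange_big /=; apply: eq_bigr => i _; rewrite mulr_sumr.
by apply: eq_bigr => z _; rewrite mulr_sumr.
Qed.

Lemma resample_Pkc j c (X : Th -> C) phi : Pkc q lam j c X ->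
  resample X phi = (#|Y|%:R * (c ord0)%:~R) * X phi.
Proof.
move=> [N [a [g [Sg XE]]]]; rewrite (resample_lincomb XE) XE mulr_sumr.
apply: eq_bigr => i _; have [A [_ fA]] := Sg i.
by rewrite (resample_fundamental _ fA) mulrCA.
Qed.

Lemma Dstar_Pkc j c (X : Th -> C) : Pkc q lam j c X ->
  Pkc q lam j.+1 (cinc c) (Dstar j.+1 X).
Proof.
move=> [N [a [g [Sg XE]]]]; apply: (span_ext _ (Dstar_lincomb j.+1 XE)).
apply: span_sum => i _; apply: spanZ.
have [A [cA [idx [Fj [cnt eig FE]]]]] := Sg i.
apply: (span_ext _ (eq_Dstar (G := prodf Fj A) (fun t _ => FE t))).
apply: (span_ext _ (Dstar_prodf Fj cA)); apply: span_sum => x; rewrite inE => xA.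
apply: span1; exists (x |: A); split; first by rewrite cardsU1 xA cA.
exact: fundamental_pad1.
Qed.

Lemma Dop_Dstar_Pkc j c (X : Th -> C) phi : Pkc q lam j c X -> #|dom phi| = j ->
  Dop j.+1 (Dstar j.+1 X) phi = Dstar j (Dop j X) phi +
  (((n - j) * #|Y|)%:R - #|Y|%:R * (c ord0)%:~R) * X phi.
Proof.
by move=> PX cphi; rewrite (Dop_Dstar_comm _ cphi) (resample_Pkc _ PX) mulrBl addrA.
Qed.

End Fundamental.

Section InnerProduct.
Variables (C : numClosedFieldType) (Y : finType) (n : nat).
Local Notation Th := (Theta Y n).
Implicit Types (F G X Z : Th -> C).

Lemma eq_ip h F F' G G' : (forall t, #|dom t| = h -> F t = F' t) ->
  (forall t, #|dom t| = h -> G t = G' t) -> ip h F G = ip h F' G'.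
Proof. by move=> FF' GG'; apply: eq_bigr => t /eqP ct; rewrite FF' ?GG'. Qed.

Lemma ipZl h (s : C) F G : ip h (fun t => s * F t) G = s * ip h F G.
Proof. by rewrite /ip mulr_sumr; apply: eq_bigr => t _; rewrite mulrA. Qed.

Lemma ip_eq0r h F G : (forall t, G t = 0) -> ip h F G = 0.
Proof. by move=> G0; apply: big1 => t _; rewrite G0 rmorph0 mulr0. Qed.

Lemma ip_conj h F G : ip h F G = Num.conj (ip h G F).
Proof.
by rewrite /ip rmorph_sum; apply: eq_bigr => t _; rewrite rmorphM /= conjCK mulrC.
Qed.

Lemma ip_Dstarl k X Z : ip k.+1 (Dstar k.+1 X) Z = ip k X (Dop k.+1 Z).
Proof.
rewrite /ip /Dstar /Dop.
rewrite (eq_bigr (fun t => \sum_(p | #|dom p| == k)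
  if subf p t then X p * Num.conj (Z t) else 0)) => [|t /eqP ->]; last first.
  by rewrite eqxx /= mulr_suml big_mkcondr; apply: eq_bigr => p _; case: ifP.
rewrite exchange_big /=; apply: eq_bigr => p /eqP ->.
by rewrite eqxx rmorph_sum mulr_sumr big_mkcondr; apply: eq_bigr => t _; case: ifP.
Qed.

Lemma ip_Dstarr k X Z : ip k.+1 X (Dstar k.+1 Z) = ip k (Dop k.+1 X) Z.
Proof. by rewrite ip_conj ip_Dstarl ip_conj conjCK. Qed.

End InnerProduct.

Section Orthogonality.
Variables (C : numClosedFieldType) (Y : finType) (n m : nat).
Variables (q : Y -> Y -> C) (lam : 'I_m.+1 -> C).
Hypothesis hq : sym_irr_stochastic q.
Hypothesis hlam : eigen_enum q lam.
Local Notation Th := (Theta Y n).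

Fixpoint Dstar_iter (k r : nat) (X : Th -> C) : Th -> C :=
  if r is r'.+1 then Dstar (k + r) (Dstar_iter k r' X) else X.

Lemma Dstar_iterS k r (X : Th -> C) :
  Dstar_iter k r.+1 X = Dstar (k + r).+1 (Dstar_iter k r X).
Proof. by rewrite /= addnS. Qed.

Lemma Phck_Dstar_iter d k c (G : Th -> C) : Phck q lam d k c G ->
  exists c0 (G0 : Th -> C), [/\ Pkc q lam k c0 G0, (forall t, Dop k G0 t = 0) &
    forall t, G t = Dstar_iter k d G0 t].
Proof.
elim: d c G => [|d IH] c G /=; first by move=> [PG DG]; exists c, G.
move=> [F [PF GE]]; have [c0 [G0 [P0 D0 FE]]] := IH _ _ PF.
by exists c0, G0; split=> // t; rewrite GE; apply: eq_Dstar => u _; apply: FE.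
Qed.

Lemma Dstar_iter_Pkc k c (F0 : Th -> C) r : Pkc q lam k c F0 ->
  exists c', Pkc q lam (k + r) c' (Dstar_iter k r F0).
Proof.
move=> P0; elim: r => [|r [c' IH]]; first by exists c; rewrite addn0.
by exists (cinc c'); rewrite Dstar_iterS addnS; apply: Dstar_Pkc.
Qed.

Lemma Dop_Dstar_iter k c (F0 : Th -> C) : Pkc q lam k c F0 ->
  (forall t, Dop k F0 t = 0) -> forall r, exists s : C, forall phi : Th,
  #|dom phi| = (k + r)%N ->
  Dop (k + r).+1 (Dstar_iter k r.+1 F0) phi = s * Dstar_iter k r F0 phi.
Proof.
move=> P0 D0; elim=> [|r [s IH]].
  exists (((n - k) * #|Y|)%:R - #|Y|%:R * (c ord0)%:~R) => phi; rewrite addn0 => cphi.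
  rewrite Dstar_iterS addn0 (Dop_Dstar_Pkc hq hlam P0 cphi).
  by rewrite (eq_Dstar (G := fun _ => 0)) ?Dstar0 ?add0r.
have [c' Pr] := Dstar_iter_Pkc r.+1 P0.
exists (s + (((n - (k + r.+1)) * #|Y|)%:R - #|Y|%:R * (c' ord0)%:~R)) => phi cphi.
rewrite Dstar_iterS (Dop_Dstar_Pkc hq hlam Pr cphi) [RHS]mulrDl.
congr (_ + _); rewrite [in RHS]Dstar_iterS -DstarZ addnS.
by apply: eq_Dstar => u /IH.
Qed.

Lemma ip_Dstar_iter_eq0 k1 k2 c1 (F0 G0 : Th -> C) : (k1 < k2)%N ->
  Pkc q lam k1 c1 F0 -> (forall t, Dop k1 F0 t = 0) -> (forall t, Dop k2 G0 t = 0) ->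
  forall e r, (k1 + r = k2 + e)%N ->
  ip (k2 + e) (Dstar_iter k1 r F0) (Dstar_iter k2 e G0) = 0.
Proof.
move=> lt12 PF DF DG; elim=> [|e IH] [|r] Er; try by exfalso; lia.
  move: Er DG; rewrite Dstar_iterS !addn0 addnS => <- DG.
  by rewrite ip_Dstarl; apply: ip_eq0r.
have {}Er : (k1 + r = k2 + e)%N by lia.
have [s Hs] := Dop_Dstar_iter PF DF r.
rewrite [Dstar_iter k2 _ _]Dstar_iterS addnS ip_Dstarr.
rewrite (eq_ip (F' := fun t => s * Dstar_iter k1 r F0 t) (G' := Dstar_iter k2 e G0)) //.
  by rewrite ipZl IH ?mulr0.
by move=> t ct; rewrite -Er Hs ?Er.
Qed.

End Orthogonality.

Theorem lemma7p10 (C : numClosedFieldType) (Y : finType) (n m : nat)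
  (q : Y -> Y -> C) (lam : 'I_m.+1 -> C)
  (hq : sym_irr_stochastic q) (hlam : eigen_enum q lam)
  (h : nat) (hh : (h <= n)%N) (b : 'I_m.+1 -> nat)
  (hb : (\sum_(i < m.+1) b i)%N = h)
  (k1 k2 : nat)
  (hk1 : [/\ (ell b <= k1)%N, (k1 <= h)%N & (2 * k1 <= n + ell b)%N])
  (hk2 : [/\ (ell b <= k2)%N, (k2 <= h)%N & (2 * k2 <= n + ell b)%N])
  (hneq : k1 <> k2)
  (F G : Theta Y n -> C) :
  Phk q lam h (fun i => (b i)%:Z) k1 F ->
  Phk q lam h (fun i => (b i)%:Z) k2 G ->
  ip h F G = 0.
Proof.
move=> hF hG; case: hk1 hk2 => [_ k1h _] [_ k2h _].
have [c1 [F0 [PF DF FE]]] := Phck_Dstar_iter hF.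
have [c2 [G0 [PG DG GE]]] := Phck_Dstar_iter hG.
rewrite (eq_ip (F' := Dstar_iter k1 (h - k1) F0) (G' := Dstar_iter k2 (h - k2) G0)) //.
have Eh k : (k <= h)%N -> (k + (h - k))%N = h by move=> kh; rewrite subnKC.
case: (ltngtP k1 k2) => [lt12|lt21|//].
  by rewrite -{1}(Eh _ k2h) (ip_Dstar_iter_eq0 hq hlam lt12 PF DF DG) ?Eh.
rewrite ip_conj -{1}(Eh _ k1h) (ip_Dstar_iter_eq0 hq hlam lt21 PG DG DF) ?Eh //.
exact: rmorph0.
Qed.
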